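(* Let $L$ be an oriented classical or virtual link with $n$ components. The forbidden matrix $\mathcal{FM}(L)\in M_n(\mathbb{Z})$ is an invariant of classical and virtual links up to conjugation by a permutation matrix.
   Context: An oriented (classical or virtual) link with $n$ components is represented by a signed Gauss diagram: $n$ oriented circles, one per component, with arrows from over-crossing point to under-crossing point, each arrow carrying the sign $\pm1$ of its crossing; virtual links are equivalence classes of such diagrams under Gauss-diagram Reidemeister moves. The forbidden moves are: interchange two adjacent arrowheads, or two adjacent arrow tails, on a circle. Using forbidden and Reidemeister moves, a Gauss diagram can be reduced to one with no arrow having both endpoints on the same circle and in which, for each ordered pair $(j,k)$ of distinct circles, all arrows from circle $j$ to circle $k$ have the same sign. The forbidden quiver $\mathcal{FQ}(L)$ is obtained by shrinking each circle of this reduced diagram to a vertex; $m$ parallel arrows of sign $\varepsilon$ from vertex $j$ to vertex $k$ are recorded as a single arrow with integer label $\varepsilon m$. The forbidden matrix $\mathcal{FM}(L)$ is the $n\times n$ integer matrix whose entry in row $j$, column $k$ is the label on the arrow from vertex $j$ to vertex $k$ of $\mathcal{FQ}(L)$ (and $0$ if there is no such arrow; in particular the diagonal is $0$). *)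

From mathcomp Require Import all_boot all_order all_algebra all_fingroup.
From Stdlib Require Import Relations.
Set Implicit Arguments. Unset Strict Implicit. Unset Printing Implicit Defensive.
Import GRing.Theory Num.Theory.

(* An endpoint is (arrow label, is_head).  Circle [i] of a Gauss diagram on
   [n] circles is the cyclic sequence of endpoints met along its orientation
   (read linearly from some base point; the base point is moved by [rot_step]).
   [sgn a] is the sign of arrow [a] (true = +1, false = -1). *)
Record gauss (n : nat) := Gauss {
  circ : 'I_n -> seq (nat * bool);
  sgn : nat -> bool }.

Section Gauss.
Variable n : nat.
Implicit Types D : gauss n.

Definition ends D : seq (nat * bool) := flatten [seq circ D i | i <- enum 'I_n].

Definition wf D : bool :=
  uniq (ends D) && all (fun e => (e.1, ~~ e.2) \in ends D) (ends D).

Definition adj D (x y : nat * bool) : Prop :=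
  exists i s1 s2, circ D i = s1 ++ x :: y :: s2.

Definition adjo D (x y : nat * bool) (o : bool) : Prop :=
  if o then adj D x y else adj D y x.

Definition sw (x y e : nat * bool) : nat * bool :=
  if e == x then y else if e == y then x else e.

Definition erase_lbl (ls : seq nat) D (i : 'I_n) : seq (nat * bool) :=
  [seq e <- circ D i | e.1 \notin ls].

Definition same_sgn D D' := forall a, sgn D' a = sgn D a.

Definition rot_step D D' : Prop :=
  exists (i : 'I_n) k, circ D' i = rot k (circ D i) /\
    (forall j, j != i -> circ D' j = circ D j) /\ same_sgn D D'.

Definition relabel_step D D' : Prop :=
  exists f : nat -> nat, injective f /\
    (forall i, circ D' i = [seq (f e.1, e.2) | e <- circ D i]) /\
    (forall a, sgn D' (f a) = sgn D a).

(* renumbering of the (unordered) components *)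
Definition perm_step D D' : Prop :=
  exists s : 'S_n, (forall i, circ D' i = circ D (s i)) /\ same_sgn D D'.

Definition R1_step D D' : Prop :=
  exists a h, adj D' (a, h) (a, ~~ h) /\
    (forall i, circ D i = erase_lbl [:: a] D' i) /\
    (forall b, b != a -> sgn D b = sgn D' b).

Definition R2_step D D' : Prop :=
  exists a b, a != b /\ sgn D' a = ~~ sgn D' b /\
    adj D' (a, false) (b, false) /\
    (adj D' (a, true) (b, true) \/ adj D' (b, true) (a, true)) /\
    (forall i, circ D i = erase_lbl [:: a; b] D' i) /\
    (forall c, c \notin [:: a; b] -> sgn D c = sgn D' c).

(* R3 admissibility of a configuration: arrows a : T->M, b : T->B, c : M->B
   (T top, M middle, B bottom strand); oT = tail a before tail b on T,
   oM = head a before tail c on M, oB = head b before head c on B.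
   This is exactly the set of 16 configurations realised by three oriented
   lines in the plane. *)
Definition R3_ok (oT oM oB sa sb sc : bool) : bool :=
  ((sa (+) sb) == (oM (+) oB)) && ((sa (+) sc) == (oT (+) oB)).

(* R3: reverse the order of the two endpoints on each of the three segments *)
Definition R3_step D D' : Prop :=
  exists a b c oT oM oB, uniq [:: a; b; c] /\
    adjo D (a, false) (b, false) oT /\
    adjo D (a, true) (c, false) oM /\
    adjo D (b, true) (c, true) oB /\
    R3_ok oT oM oB (sgn D a) (sgn D b) (sgn D c) /\
    (forall i, circ D' i =
       [seq sw (a, false) (b, false) (sw (a, true) (c, false)
              (sw (b, true) (c, true) e)) | e <- circ D i]) /\
    same_sgn D D'.

Definition forb_step D D' : Prop :=
  exists a b h, a != b /\ adj D (a, h) (b, h) /\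
    (forall i, circ D' i = [seq sw (a, h) (b, h) e | e <- circ D i]) /\
    same_sgn D D'.

Definition reid_step D D' : Prop :=
  wf D /\ wf D' /\
  (rot_step D D' \/ relabel_step D D' \/ perm_step D D' \/
   R1_step D D' \/ R2_step D D' \/ R3_step D D').

Definition FR_step D D' : Prop :=
  reid_step D D' \/ (wf D /\ wf D' /\ forb_step D D').

Definition link_equiv : relation (gauss n) := clos_refl_sym_trans _ reid_step.
Definition FR_equiv : relation (gauss n) := clos_refl_sym_trans _ FR_step.

Definition tail_on D (a : nat) (j : 'I_n) : bool := (a, false) \in circ D j.
Definition head_on D (a : nat) (k : 'I_n) : bool := (a, true) \in circ D k.

Definition reduced D : Prop :=
  wf D /\
  (forall i a, ~~ (tail_on D a i && head_on D a i)) /\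
  (forall j k a b, tail_on D a j -> head_on D a k ->
                   tail_on D b j -> head_on D b k -> sgn D a = sgn D b).

Definition arrows D (j k : 'I_n) : seq nat :=
  [seq e.1 | e <- circ D j & (~~ e.2) && head_on D e.1 k].

(* label eps*m of the arrow j -> k of the forbidden quiver (0 if m = 0) *)
Definition fq_label D (j k : 'I_n) : int :=
  let l := arrows D j k in
  ((if sgn D (head 0%N l) then 1 else -1) * (size l)%:Z)%R.

Definition FM D : 'M[int]_n := \matrix_(j, k) fq_label D j k.

End Gauss.

(* Count the arrows from component j to component k with their signs; this
   virtual linking number lk(j,k) is unchanged by every Reidemeister move
   (R1 adds an arrow with both ends on one circle, R2 adds two arrows of
   opposite signs between the same pair of circles, R3 only reorders
   endpoints) and also by the forbidden moves, which only reorder endpoints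
   as well.  A renumbering of the components permutes the indices (j,k), so
   lk is an invariant of FR-equivalence up to a simultaneous permutation.  In
   a reduced diagram all arrows from j to k have one sign, so the entry (j,k)
   of the forbidden matrix is exactly lk(j,k), and its diagonal is 0. *)
From mathcomp Require Import all_boot all_order all_algebra all_fingroup.
From Stdlib Require Import Relations.
Set Implicit Arguments. Unset Strict Implicit. Unset Printing Implicit Defensive.
Import GRing.Theory.

Lemma clos_rst_sub_equiv (T : Type) (R E : relation T) :
  equivalence T E -> inclusion T R E -> inclusion T (clos_refl_sym_trans T R) E.
Proof.
case=> Erefl Etrans Esym RE x y; elim=> [u v /RE | u | u v _ | u v w _ Euv _] //.
- exact: Esym.
- exact: Etrans Euv.
Qed.

Lemma perm_map_inj (T : eqType) (f : T -> T) (s : seq T) :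
  uniq s -> injective f -> {homo f : x / x \in s} -> perm_eq (map f s) s.
Proof.
move=> us injf fs; have ufs : uniq (map f s) by rewrite map_inj_uniq.
apply: uniq_perm => //.
have sub_fs : {subset map f s <= s} by move=> _ /mapP[x xs ->]; apply: fs.
by have [] := uniq_min_size ufs sub_fs (eq_leq (esym (size_map f s))).
Qed.

Lemma big_mem_seqC (R : Type) (idx : R) (op : Monoid.com_law idx)
    (T : eqType) (s L : seq T) (F : T -> R) :
  uniq s -> uniq L ->
  \big[op/idx]_(x <- s | x \in L) F x = \big[op/idx]_(x <- L | x \in s) F x.
Proof.
move=> us uL; rewrite -[LHS]big_filter -[RHS]big_filter; apply: perm_big.
by apply: uniq_perm; rewrite ?filter_uniq // => x; rewrite !mem_filter andbC.
Qed.

Lemma perm_mx_conj (R : comUnitRingType) n (s : 'S_n) (A : 'M[R]_n) :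
  (perm_mx s *m A *m invmx (perm_mx s) = \matrix_(i, j) A (s i) (s j))%R.
Proof.
have -> : invmx (perm_mx s) = perm_mx s^-1 :> 'M[R]_n.
  by rewrite -[LHS]mul1mx -perm_mx1 -(mulVg s) perm_mxM -mulmxA
             mulmxV ?mulmx1 // unitmx_perm.
by rewrite -row_permE -col_permE; apply/matrixP => i j; rewrite !mxE.
Qed.

Lemma swK (x y : nat * bool) : involutive (sw x y).
Proof.
move=> e; rewrite /sw.
have [->|nx] := eqVneq e x; first by rewrite eqxx; case: eqVneq.
have [->|ny] := eqVneq e y; first by rewrite eqxx.
by rewrite (negPf nx) (negPf ny).
Qed.

Lemma sw_mem (x y : nat * bool) (s : seq (nat * bool)) :
  (x \in s) = (y \in s) -> {homo sw x y : e / e \in s}.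
Proof.
move=> Exy e; rewrite /sw.
by case: eqVneq => [->|_]; [rewrite Exy | case: eqVneq => [->|_]; rewrite ?Exy].
Qed.

Section VirtualLinking.
Variable n : nat.
Implicit Types D : gauss n.

Definition sgnz (b : bool) : int := if b then 1%R else (-1)%R.

Definition vlk D (j k : 'I_n) : int :=
  (\sum_(e <- circ D j | ~~ e.2 && head_on D e.1 k) sgnz (sgn D e.1))%R.

Lemma count_ends D x :
  count_mem x (ends D) = \sum_(i < n) count_mem x (circ D i).
Proof.
by rewrite /ends count_flatten -map_comp sumnE big_map -[RHS]big_enum.
Qed.

Lemma wf_count_circ D x : wf D -> \sum_(i < n) count_mem x (circ D i) <= 1.
Proof. by case/andP=> u _; rewrite -count_ends count_uniq_mem //; case: (_ \in _). Qed.

Lemma wf_uniq D i : wf D -> uniq (circ D i).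
Proof.
move=> w; apply: count_mem_uniq => x.
have : count_mem x (circ D i) <= 1.
  by apply: leq_trans (wf_count_circ x w); rewrite (bigD1 i) //= leq_addr.
case: (boolP (x \in circ D i)) => [xi | /count_memPn -> //].
by rewrite -has_pred1 has_count in xi; case: (count _ _) xi => // [] [].
Qed.

Lemma wf_circ_unique D x i j :
  wf D -> x \in circ D i -> x \in circ D j -> i = j.
Proof.
move=> w xi xj; apply/eqP; apply: contraT => nij.
have := wf_count_circ x w; rewrite (bigD1 i) //= (bigD1 j) 1?eq_sym //=.
have ci : 0 < count_mem x (circ D i) by rewrite -has_count has_pred1.
have cj : 0 < count_mem x (circ D j) by rewrite -has_count has_pred1.
by rewrite leqNgt (leq_trans (leq_add ci cj)) // leq_add2l leq_addr.
Qed.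

Lemma adj_circ D x y : adj D x y -> exists i, x \in circ D i /\ y \in circ D i.
Proof. by case=> i [s1 [s2 E]]; exists i; rewrite E !mem_cat !inE !eqxx !orbT. Qed.

Lemma adj_mem D x y j : wf D -> adj D x y -> (x \in circ D j) = (y \in circ D j).
Proof.
move=> w /adj_circ[i [xi yi]].
by apply/idP/idP => [/(wf_circ_unique w xi) | /(wf_circ_unique w yi)] <-.
Qed.

Lemma adjo_mem D x y o j :
  wf D -> adjo D x y o -> (x \in circ D j) = (y \in circ D j).
Proof. by case: o => w /(adj_mem j w). Qed.

Lemma vlk_perm_eq D D' :
  (forall i, perm_eq (circ D' i) (circ D i)) -> same_sgn D D' ->
  forall j k, vlk D' j k = vlk D j k.
Proof.
move=> P S j k; rewrite /vlk (perm_big _ (P j)); apply: eq_big => e.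
  by rewrite /head_on (perm_mem (P k)).
by rewrite S.
Qed.

Lemma head_on_erase ls D D' a k :
  (forall i, circ D i = erase_lbl ls D' i) -> a \notin ls ->
  head_on D a k = head_on D' a k.
Proof. by move=> Ec a_ls; rewrite /head_on Ec mem_filter /= a_ls. Qed.

Lemma vlk_erase ls D D' j k :
  (forall i, circ D i = erase_lbl ls D' i) ->
  (forall b, b \notin ls -> sgn D b = sgn D' b) ->
  (vlk D' j k = vlk D j k +
    \sum_(e <- circ D' j | (e.1 \in ls) && (~~ e.2 && head_on D' e.1 k))
       sgnz (sgn D' e.1))%R.
Proof.
move=> Ec Es; rewrite /vlk Ec /erase_lbl big_filter_cond.
rewrite (bigID (fun e : nat * bool => e.1 \in ls)) /= addrC.
congr (_ + _)%R; last by apply: eq_bigl => e; rewrite andbC.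
apply: eq_big => [e | e /andP[_ e_ls]]; last by rewrite Es.
case: (boolP (e.1 \in ls)) => [_ | e_ls]; first by rewrite andbF.
by rewrite andbT (head_on_erase _ Ec e_ls).
Qed.

Lemma vlk_R1 D D' j k : wf D' -> R1_step D D' -> j != k -> vlk D j k = vlk D' j k.
Proof.
move=> w [a [h [Hadj [Ec Es]]]] jk.
rewrite (vlk_erase j k Ec) => [|b]; last by rewrite inE; apply: Es.
rewrite big1_seq ?addr0 // => -[x t] /andP[/andP[+ /andP[nt hk]] xj].
rewrite inE => /eqP /= xa; subst x.
case: t nt hk xj => //= _ hk xj.
have [i [hi nhi]] := adj_circ Hadj.
have [ai at_i] : (a, false) \in circ D' i /\ (a, true) \in circ D' i.
  by case: h {Hadj} hi nhi.
by move: jk; rewrite (wf_circ_unique w xj ai) (wf_circ_unique w hk at_i) eqxx.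
Qed.

(* The two added arrows have their tails on one circle, their heads on one
   circle, and opposite signs, so their contributions cancel. *)
Lemma vlk_R2 D D' j k : wf D' -> R2_step D D' -> vlk D j k = vlk D' j k.
Proof.
move=> w [a [b [ab [sab [Ht [Hh [Ec Es]]]]]]].
rewrite (vlk_erase j k Ec Es); apply/esym/eqP; rewrite addrC -subr_eq0 addrK.
set L := [:: (a, false); (b, false)].
rewrite (eq_bigl (fun e => (e \in L) && head_on D' e.1 k)); last first.
  by case=> x [] /=; rewrite !inE !xpair_eqE /= ?andbF ?andbT.
rewrite big_mkcondr big_mem_seqC ?wf_uniq //=; last first.
  by rewrite !inE xpair_eqE negb_and ab.
rewrite !big_cons big_nil /= (adj_mem j w Ht) sab.
have -> : head_on D' a k = head_on D' b k.
  by rewrite /head_on; case: Hh => /(adj_mem k w) ->.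
by case: (_ \in _); case: (head_on D' b k); case: (sgn D' b).
Qed.

Lemma R3_perm_eq D D' i : wf D -> R3_step D D' -> perm_eq (circ D' i) (circ D i).
Proof.
move=> w [a [b [c [oT [oM [oB [_ [H1 [H2 [H3 [_ [Ec _]]]]]]]]]]]].
rewrite Ec; apply: perm_map_inj; first exact: wf_uniq.
  by move=> e1 e2 /(inv_inj (swK _ _)) /(inv_inj (swK _ _)) /(inv_inj (swK _ _)).
move=> e ei; apply: (sw_mem (adjo_mem i w H1)); apply: (sw_mem (adjo_mem i w H2)).
exact: (sw_mem (adjo_mem i w H3)).
Qed.

Lemma forb_perm_eq D D' i : wf D -> forb_step D D' -> perm_eq (circ D' i) (circ D i).
Proof.
move=> w [a [b [h [_ [H1 [Ec _]]]]]].
rewrite Ec; apply: perm_map_inj; first exact: wf_uniq.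
  exact: inv_inj (swK _ _).
exact: sw_mem (adj_mem i w H1).
Qed.

Definition vlk_conj D1 D2 :=
  exists s : 'S_n, forall j k, j != k -> vlk D2 j k = vlk D1 (s j) (s k).

Lemma vlk_conj_equiv : equivalence (gauss n) vlk_conj.
Proof.
have inj_ne (s : 'S_n) j k : j != k -> s j != s k.
  by apply: contra => /eqP/perm_inj ->.
split.
- by move=> D; exists 1%g => j k _; rewrite !perm1.
- move=> D1 D2 D3 [s Hs] [t Ht]; exists (t * s)%g => j k jk.
  by rewrite Ht // Hs ?inj_ne // !permM.
- move=> D1 D2 [s Hs]; exists s^-1%g => j k jk.
  by rewrite Hs ?inj_ne // !permKV.
Qed.

Lemma vlk_conj_eq D D' :
  (forall j k, j != k -> vlk D' j k = vlk D j k) -> vlk_conj D D'.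
Proof. by move=> E; exists 1%g => j k jk; rewrite !perm1 E. Qed.

Lemma FR_step_vlk_conj D D' : FR_step D D' -> vlk_conj D D'.
Proof.
case=> [[w [w' [H|[H|[H|[H|[H|H]]]]]]] | [w [w' H]]].
- apply: vlk_conj_eq => j k _; case: H => [i [m [Ei [Ej Es]]]].
  apply: vlk_perm_eq Es j k => i'.
  by have [->|/Ej ->] := eqVneq i' i; rewrite ?Ei ?perm_rot.
- apply: vlk_conj_eq => j k _; case: H => [f [injf [Ec Es]]].
  have injfe : injective (fun e : nat * bool => (f e.1, e.2)).
    by move=> [x1 y1] [x2 y2] [/injf -> ->].
  rewrite /vlk Ec big_map; apply: eq_big => [e | e _]; last by rewrite Es.
  by rewrite /head_on Ec -[(f e.1, true)]/((fun e => (f e.1, e.2)) (e.1, true))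
             (mem_map injfe).
- case: H => [s [Ec Es]]; exists s => j k _.
  by rewrite /vlk /head_on Ec; apply: eq_big => [e | e _]; rewrite ?Ec ?Es.
- by apply: vlk_conj_eq => j k jk; rewrite (vlk_R1 w' H jk).
- by apply: vlk_conj_eq => j k _; rewrite (vlk_R2 j k w' H).
- apply: vlk_conj_eq => j k _; apply: vlk_perm_eq => [i|]; first exact: R3_perm_eq.
  by case: H => [a [b [c [oT [oM [oB [_ [_ [_ [_ [_ [_ ?]]]]]]]]]]]].
- apply: vlk_conj_eq => j k _; apply: vlk_perm_eq => [i|]; first exact: forb_perm_eq.
  by case: H => [a [b [h [_ [_ [_ ?]]]]]].
Qed.

Lemma FR_equiv_vlk_conj : inclusion _ (@FR_equiv n) vlk_conj.
Proof. exact: clos_rst_sub_equiv vlk_conj_equiv FR_step_vlk_conj. Qed.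

Lemma link_equiv_vlk_conj : inclusion _ (@link_equiv n) vlk_conj.
Proof.
apply: clos_rst_sub_equiv vlk_conj_equiv _ => D D' H.
by apply: FR_step_vlk_conj; left.
Qed.

Lemma fq_label_reduced D j k : reduced D -> fq_label D j k = vlk D j k.
Proof.
case=> _ [_ Hsgn]; rewrite /fq_label /vlk /arrows -big_filter.
set l := filter _ _.
have tail_head e : e \in l -> tail_on D e.1 j /\ head_on D e.1 k.
  by rewrite mem_filter /tail_on => /andP[/andP[]]; case: e => x [].
case: l tail_head => [|e0 l] Hl; first by rewrite big_nil mulr0.
have [t0 h0] := Hl e0 (mem_head _ _).
rewrite (eq_big_seq (fun=> sgnz (sgn D e0.1))) => [|e /Hl[te he]]; last first.
  by rewrite (Hsgn j k e.1 e0.1).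
by rewrite big_const_seq count_predT iter_addr_0 size_map -mulr_natr natz.
Qed.

Lemma vlk_reduced_diag D j : reduced D -> vlk D j j = 0%R.
Proof.
case=> _ [Hloop _]; rewrite /vlk big1_seq // => -[x []] //= /andP[hj xj].
by have := Hloop j x; rewrite /tail_on xj hj.
Qed.

Lemma FM_reduced_conj R1 R2 :
  reduced R1 -> reduced R2 -> vlk_conj R1 R2 ->
  exists s : 'S_n, FM R2 = (perm_mx s *m FM R1 *m invmx (perm_mx s))%R.
Proof.
move=> r1 r2 [s Hs]; exists s; rewrite perm_mx_conj.
apply/matrixP => i j; rewrite !mxE !fq_label_reduced //.
by have [->|/Hs] := eqVneq i j; rewrite ?vlk_reduced_diag.
Qed.

End VirtualLinking.

Theorem mainTheorem2 (n : nat) (D1 D2 R1 R2 : gauss n) :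
  wf D1 -> wf D2 -> link_equiv D1 D2 ->
  FR_equiv D1 R1 -> reduced R1 ->
  FR_equiv D2 R2 -> reduced R2 ->
  exists s : 'S_n,
    FM R2 = (perm_mx s *m FM R1 *m invmx (perm_mx s))%R.
Proof.
move=> _ _ L12 F1 r1 F2 r2; apply: FM_reduced_conj => //.
have [_ Etrans Esym] := vlk_conj_equiv n.
apply: (Etrans _ D2); last exact: FR_equiv_vlk_conj.
apply: (Etrans _ D1); first exact/Esym/FR_equiv_vlk_conj.
exact: link_equiv_vlk_conj.
Qed.
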